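(* Let $v,\Delta$ be nonnegative integers with $v+\Delta\le4$. Then for every $0<\lambda\le1$, $\varPhi_{v,\Delta}(\lambda)\le(1+4\lambda+6\lambda^2)^{v/4}$.
   Context: For nonnegative integers $v,\Delta$ and $0<\lambda\le 1$, the local factor is \[ \varPhi_{v,\Delta}(\lambda)=\frac{\sum_{t=0}^v\binom vt\lambda^{\min\{t,\,\Delta+v-t\}}}{1+\lambda^{\Delta}}. \] *)

From Stdlib Require Import Reals Lra Lia Arith.
Open Scope R_scope.

(* Local factor Phi_{v,Delta}(lambda) =
   (sum_{t=0}^v C(v,t) lambda^{min(t, Delta+v-t)}) / (1 + lambda^Delta).
   Note Delta+v-t >= 0 for t <= v, so nat subtraction is exact. *)
Definition Phi (v Delta : nat) (lam : R) : R :=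
  sum_f_R0 (fun t => C v t * lam ^ (Nat.min t (Delta + v - t))) v
  / (1 + lam ^ Delta).

(* Both sides are positive, so it suffices to compare fourth powers:
   writing Phi = N / D, the claim is N^4 <= (1 + 4 lam + 6 lam^2)^v D^4.
   For v = 0 this is D >= 1; the remaining ten pairs (v, Delta) give
   explicit polynomial inequalities on ]0, 1]. *)
From Stdlib Require Import Reals Lra Lia.
Open Scope R_scope.

Lemma Rpower_pow_inv (x : R) (n : nat) :
  0 < x -> (0 < n)%nat -> Rpower (x ^ n) (/ INR n) = x.
Proof.
  intros Hx Hn. unfold Rpower.
  rewrite ln_pow by lra.
  replace (/ INR n * (INR n * ln x)) with (ln x)
    by (field; apply not_0_INR; lia).
  now rewrite exp_ln.
Qed.

Lemma le_Rpower_of_pow_le (x P : R) (m n : nat) :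
  0 < x -> 0 < P -> (0 < n)%nat -> x ^ n <= P ^ m ->
  x <= Rpower P (INR m / INR n).
Proof.
  intros Hx HP Hn H.
  assert (HPm : Rpower P (INR m / INR n) = Rpower (P ^ m) (/ INR n)).
  { unfold Rpower. rewrite ln_pow by lra. f_equal. unfold Rdiv. ring. }
  rewrite HPm, <- (Rpower_pow_inv x n Hx Hn).
  apply Rle_Rpower_l.
  - left. apply Rinv_0_lt_compat, lt_0_INR. lia.
  - split; [apply pow_lt |]; assumption.
Qed.

Lemma div_le_Rpower_of_pow_le (a b P : R) (m n : nat) :
  0 < a -> 0 < b -> 0 < P -> (0 < n)%nat -> a ^ n <= P ^ m * b ^ n ->
  a / b <= Rpower P (INR m / INR n).
Proof.
  intros Ha Hb HP Hn H.
  apply le_Rpower_of_pow_le; try assumption.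
  - now apply Rdiv_lt_0_compat.
  - assert (Hbn : 0 < b ^ n) by now apply pow_lt.
    unfold Rdiv. rewrite Rpow_mult_distr, pow_inv.
    apply (Rmult_le_reg_r (b ^ n) _ _ Hbn).
    rewrite Rmult_assoc, Rinv_l by lra. lra.
Qed.

Definition Phi_numerator (v Delta : nat) (lam : R) : R :=
  sum_f_R0 (fun t => C v t * lam ^ (Nat.min t (Delta + v - t))) v.

Lemma Phi_numerator_0 (Delta : nat) (lam : R) : Phi_numerator 0 Delta lam = 1.
Proof. unfold Phi_numerator, C. simpl. field. Qed.

Lemma Phi_0_le_1 (Delta : nat) (lam : R) : 0 < lam -> Phi 0 Delta lam <= 1.
Proof.
  intros Hlam.
  assert (Hpow : 0 < lam ^ Delta) by now apply pow_lt.
  unfold Phi. fold (Phi_numerator 0 Delta lam).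
  rewrite Phi_numerator_0. unfold Rdiv. rewrite Rmult_1_l.
  apply (Rle_trans _ (/ 1)); [apply Rinv_le_contravar; lra | rewrite Rinv_1; lra].
Qed.

Lemma Phi_le_of_numerator (v Delta : nat) (lam N : R) :
  0 < lam -> Phi_numerator v Delta lam = N -> 0 < N ->
  N ^ 4 <= (1 + 4 * lam + 6 * lam ^ 2) ^ v * (1 + lam ^ Delta) ^ 4 ->
  Phi v Delta lam <= Rpower (1 + 4 * lam + 6 * lam ^ 2) (INR v / 4).
Proof.
  intros Hlam HN HNpos H.
  replace 4 with (INR 4) at 2 by (simpl; ring).
  unfold Phi. fold (Phi_numerator v Delta lam). rewrite HN.
  apply div_le_Rpower_of_pow_le; [assumption | | nra | lia | exact H].
  assert (0 < lam ^ Delta) by now apply pow_lt. lra.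
Qed.

Ltac bound_by_numerator N :=
  apply (Phi_le_of_numerator _ _ _ N);
  [assumption | unfold Phi_numerator, C; simpl; field | nra | simpl; nra].

Theorem lemma12 (v Delta : nat) (lam : R) :
  (v + Delta <= 4)%nat -> 0 < lam -> lam <= 1 ->
  Phi v Delta lam <= Rpower (1 + 4 * lam + 6 * lam ^ 2) (INR v / 4).
Proof.
  intros Hsum Hlam Hlam1.
  destruct v as [|v].
  { replace (INR 0 / 4) with 0 by (simpl; field).
    rewrite Rpower_O by nra. now apply Phi_0_le_1. }
  destruct v as [|[|[|[|v]]]]; destruct Delta as [|[|[|[|Delta]]]];
    try (exfalso; lia).
  (* (v, Delta) runs through (1, 0..3), (2, 0..2), (3, 0..1), (4, 0). *)
  - bound_by_numerator 2.
  - bound_by_numerator (1 + lam).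
  - bound_by_numerator (1 + lam).
  - bound_by_numerator (1 + lam).
  - bound_by_numerator (2 + 2 * lam).
  - bound_by_numerator (1 + 3 * lam).
  - bound_by_numerator (1 + 2 * lam + lam ^ 2).
  - bound_by_numerator (2 + 6 * lam).
  - bound_by_numerator (1 + 4 * lam + 3 * lam ^ 2).
  - bound_by_numerator (2 + 8 * lam + 6 * lam ^ 2).
Qed.
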